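(* \[ \sum_{n=1}^\infty\frac{a_n^2\,H_n^{(3)}}{2n-1}=\frac{2}{\pi}\Big(16G+4\pi-8\pi\log2-\zeta(3)-8\Big). \]
   Context: $a_n=\frac{1}{4^n}\binom{2n}{n}$; $H_n^{(3)}=\sum_{k=1}^n\frac{1}{k^3}$; $G=\sum_{k\ge0}\frac{(-1)^k}{(2k+1)^2}$ is Catalan's constant; $\zeta(3)=\sum_{k\ge1}k^{-3}$. *)

From Stdlib Require Import Reals.
From Coquelicot Require Import Coquelicot.
Open Scope R_scope.

Definition a_ (n : nat) : R := Binomial.C (2 * n) n / 4 ^ n.

Definition H3 (n : nat) : R := sum_n_m (fun k => / (INR k) ^ 3) 1 n.

Definition catalan : R := Series (fun k => (-1) ^ k / (2 * INR k + 1) ^ 2).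

(* zeta(3) = sum_{k>=1} 1/k^3 ; index shifted: term k is 1/(k+1)^3 *)
Definition zeta3 : R := Series (fun k => / (INR k + 1) ^ 3).

(* the summand of the series, n >= 1 (term 0 is set to 0) *)
Definition term (n : nat) : R :=
  match n with
  | O => 0
  | S _ => (a_ n) ^ 2 * H3 n / (2 * INR n - 1)
  end.

From Stdlib Require Import Reals Lra Lia Psatz.
From Coquelicot Require Import Coquelicot.
Open Scope R_scope.

(** With g_n = 4 n^2 a_n^2 / (2n - 1) one has a_n^2 / (2n - 1) = g_n - g_(n+1),
    and Wallis' integrals give g_n -> 2/pi.  Abel summation against
    H_n^(3) - H_(n-1)^(3) = 1/n^3 and 4 / (n (2n - 1)) = 8 / (2n - 1) - 4 / n
    turn the series into 8 (1 - 2/pi) - 2 zeta(3) / pi - 4 sum_n a_n^2 / n.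
    Since int_0^(pi/2) (pi/2 - t) sin^(2n-1) t cos t dt = pi a_n / (4n) and
    sum_n a_n x^n = (1 - x)^(-1/2), the last sum is
    (4/pi) int_0^(pi/2) (pi/2 - t) tan (t/2) dt.  With t = 2s this integral
    is pi ln 2 / 2 - 4 L, where L = int_0^(pi/4) s tan s; and L is found by
    evaluating int_0^(pi/2) s cot s twice: splitting at pi/4 (with
    G = int_0^1 atan u / u du on the first half) and through the duplication
    formula 2 cot (2s) = cot s - tan s. *)

(* Coquelicot states some goals in its own structures ([plus], [scal]);
   [field] and [ring] need them at type [R]. *)
Ltac R_goal := match goal with |- ?x = ?y => change (@eq R x y) end.

Lemma continuous_of_ex_derive (f : R -> R) x : ex_derive f x -> continuous f x.
Proof. apply (ex_derive_continuous (K := R_AbsRing) (V := R_NormedModule)). Qed.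

Lemma continuity_pt_of_is_derive (f : R -> R) x l : is_derive f x l -> continuity_pt f x.
Proof.
  intro Hd. apply continuity_pt_filterlim, continuous_of_ex_derive. exists l. exact Hd.
Qed.

Lemma is_derive_minus_R (f g : R -> R) x df dg :
  is_derive f x df -> is_derive g x dg -> is_derive (fun t => f t - g t) x (df - dg).
Proof. exact (is_derive_minus f g x df dg). Qed.

Lemma is_derive_value (f : R -> R) x l1 l2 : is_derive f x l1 -> l1 = l2 -> is_derive f x l2.
Proof. intros H <-. exact H. Qed.

Lemma ex_RInt_of_continuous (f : R -> R) a b :
  (forall z, Rmin a b <= z <= Rmax a b -> continuous f z) -> ex_RInt f a b.
Proof. apply (ex_RInt_continuous (V := R_CompleteNormedModule)). Qed.

Lemma is_RInt_RInt (f : R -> R) a b : ex_RInt f a b -> is_RInt f a b (RInt f a b).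
Proof. apply (RInt_correct (V := R_CompleteNormedModule)). Qed.

Lemma is_RInt_value (f : R -> R) a b l1 l2 : is_RInt f a b l1 -> l1 = l2 -> is_RInt f a b l2.
Proof. intros H <-. exact H. Qed.

Lemma is_RInt_bounds (f : R -> R) a b a' b' l :
  is_RInt f a b l -> a = a' -> b = b' -> is_RInt f a' b' l.
Proof. intros H <- <-. exact H. Qed.

Lemma is_RInt_uniq (f : R -> R) a b l1 l2 : is_RInt f a b l1 -> is_RInt f a b l2 -> l1 = l2.
Proof.
  intros H1 H2. rewrite <- (is_RInt_unique f a b l1 H1). exact (is_RInt_unique f a b l2 H2).
Qed.

Lemma is_RInt_plus_R (f g : R -> R) a b If Ig :
  is_RInt f a b If -> is_RInt g a b Ig -> is_RInt (fun t => f t + g t) a b (If + Ig).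
Proof. exact (is_RInt_plus f g a b If Ig). Qed.

Lemma is_RInt_scal_R (f : R -> R) a b k If :
  is_RInt f a b If -> is_RInt (fun t => k * f t) a b (k * If).
Proof. exact (is_RInt_scal f a b k If). Qed.

Lemma is_RInt_lincomb_R (f g : R -> R) a b If Ig k l :
  is_RInt f a b If -> is_RInt g a b Ig ->
  is_RInt (fun t => k * f t - l * g t) a b (k * If - l * Ig).
Proof.
  intros Hf Hg. exact (is_RInt_minus _ _ a b _ _ (is_RInt_scal _ a b k _ Hf) (is_RInt_scal _ a b l _ Hg)).
Qed.

Lemma is_RInt_derive_le (F f : R -> R) a b : a <= b ->
  (forall x, a <= x <= b -> is_derive F x (f x)) ->
  (forall x, a <= x <= b -> continuous f x) -> is_RInt f a b (F b - F a).
Proof.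
  intros Hab HD HC. apply (is_RInt_derive F f a b); rewrite Rmin_left, Rmax_right by lra; assumption.
Qed.

Lemma is_RInt_dist_le (f g : R -> R) a b If Ig e : a <= b ->
  is_RInt f a b If -> is_RInt g a b Ig ->
  (forall x, a <= x <= b -> Rabs (f x - g x) <= e) -> Rabs (If - Ig) <= (b - a) * e.
Proof.
  intros Hab Hf Hg Hfg.
  assert (Hle := norm_RInt_le_const_abs (V := R_NormedModule)
                   (fun y => minus (f y) (g y)) a b (minus If Ig) e).
  rewrite Rmin_left, Rmax_right in Hle by lra.
  specialize (Hle Hfg (is_RInt_minus _ _ a b _ _ Hf Hg)).
  change (norm ?x) with (Rabs x) in Hle. rewrite (Rabs_pos_eq (b - a)) in Hle by lra.
  exact Hle.
Qed.

Lemma nondecreasing_of_is_derive (f df : R -> R) a b : a <= b ->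
  (forall x, a <= x <= b -> is_derive f x (df x)) ->
  (forall x, a <= x <= b -> 0 <= df x) -> f a <= f b.
Proof.
  intros Hab HD Hpos.
  destruct (MVT_gen f a b df) as [c [Hc E]];
    rewrite ?Rmin_left, ?Rmax_right in * by lra.
  - intros x Hx. apply HD. lra.
  - intros x Hx. apply (continuity_pt_of_is_derive f x (df x)), HD, Hx.
  - specialize (Hpos c Hc). nra.
Qed.

Lemma is_lim_seq_inv_affine c d : 0 < c -> 0 < d -> is_lim_seq (fun N => / (c * INR N + d)) 0.
Proof.
  intros Hc Hd.
  assert (Hinf : is_lim_seq (fun N => c * INR N + d) p_infty).
  { apply is_lim_seq_le_p_loc with (fun N => c * INR N).
    - exists 0%nat. intros; lra.
    - assert (H := is_lim_seq_scal_l INR c p_infty is_lim_seq_INR). simpl in H.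
      destruct (Rle_dec 0 c) as [h|h]; [|lra].
      destruct (Rle_lt_or_eq_dec 0 c h); [exact H|lra]. }
  exact (is_lim_seq_inv _ _ Hinf ltac:(discriminate)).
Qed.

Lemma is_lim_seq_of_dist_le (u e : nat -> R) (l : R) :
  (forall N, Rabs (u N - l) <= e N) -> is_lim_seq e 0 -> is_lim_seq u l.
Proof.
  intros H He.
  apply is_lim_seq_le_le with (fun N => l - e N) (fun N => l + e N).
  - intro N. specialize (H N). apply Rabs_le_between in H. lra.
  - replace (Finite l) with (Finite (l - 0)) by (f_equal; ring).
    apply is_lim_seq_minus'; [apply is_lim_seq_const | exact He].
  - replace (Finite l) with (Finite (l + 0)) by (f_equal; ring).
    apply is_lim_seq_plus'; [apply is_lim_seq_const | exact He].
Qed.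

Lemma is_series_of_is_lim_seq (u : nat -> R) (l : R) : is_lim_seq (sum_n u) l -> is_series u l.
Proof. intro H. exact H. Qed.

Lemma is_derive_odd_pow k u : is_derive (fun x => x * (x ^ 2) ^ k) u ((2 * INR k + 1) * (u ^ 2) ^ k).
Proof.
  auto_derive; auto. destruct k as [|k].
  - simpl. R_goal. ring.
  - simpl Init.Nat.pred. rewrite S_INR. R_goal. simpl pow. ring.
Qed.

(** * Central binomial coefficients and Wallis integrals *)

Lemma a_0 : a_ 0 = 1.
Proof. unfold a_, Binomial.C. simpl. field. Qed.

Lemma a_succ n : a_ (S n) = a_ n * (2 * INR n + 1) / (2 * INR n + 2).
Proof.
  unfold a_, Binomial.C.
  replace (2 * S n - S n)%nat with (S n) by lia.
  replace (2 * n - n)%nat with n by lia.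
  replace (2 * S n)%nat with (S (S (2 * n))) by lia.
  rewrite !fact_simpl, !mult_INR, !S_INR, mult_INR. simpl INR.
  assert (Hn := INR_fact_lt_0 n).
  assert (0 <= INR n) by apply pos_INR.
  assert (0 < 4 ^ n) by (apply pow_lt; lra).
  simpl pow. field; repeat split; lra.
Qed.

Lemma a_pos n : 0 < a_ n.
Proof.
  induction n as [|n IH]; [rewrite a_0; lra|].
  rewrite a_succ. assert (0 <= INR n) by apply pos_INR.
  apply Rdiv_lt_0_compat; [apply Rmult_lt_0_compat|]; lra.
Qed.

Lemma continuous_sin_pow n x : continuous (fun t => sin t ^ n) x.
Proof. apply continuous_of_ex_derive. auto_derive. auto. Qed.

Lemma ex_RInt_sin_pow n a b : ex_RInt (fun t => sin t ^ n) a b.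
Proof. apply ex_RInt_of_continuous. intros; apply continuous_sin_pow. Qed.

Definition wallis n := RInt (fun t => sin t ^ n) 0 (PI / 2).

Lemma is_RInt_wallis n : is_RInt (fun t => sin t ^ n) 0 (PI / 2) (wallis n).
Proof. apply is_RInt_RInt, ex_RInt_sin_pow. Qed.

(* Integration by parts, in the form
   (sin^(n+1) t cos t)' = (n+1) sin^n t - (n+2) sin^(n+2) t. *)
Lemma wallis_rec n : INR (n + 1) * wallis n = INR (n + 2) * wallis (n + 2).
Proof.
  assert (Hpi := PI2_RGT_0).
  assert (H : is_RInt (fun t => INR (n + 1) * sin t ^ n - INR (n + 2) * sin t ^ (n + 2)) 0 (PI / 2)
    ((fun t => sin t ^ (n + 1) * cos t) (PI / 2) - (fun t => sin t ^ (n + 1) * cos t) 0)).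
  { apply (is_RInt_derive_le (fun t => sin t ^ (n + 1) * cos t)); [lra| |].
    - intros x _. auto_derive; auto.
      replace (n + 2)%nat with (S (S n)) by lia. replace (n + 1)%nat with (S n) by lia.
      simpl Init.Nat.pred. assert (Hsc := sin2_cos2 x). unfold Rsqr in Hsc.
      apply Rminus_diag_uniq.
      replace (_ - _) with (INR (S n) * sin x ^ n * (sin x * sin x + cos x * cos x - 1))
        by (rewrite !S_INR; simpl pow; ring).
      rewrite Hsc. ring.
    - intros x _. apply continuous_of_ex_derive. auto_derive. auto. }
  simpl in H. rewrite cos_PI2, sin_0 in H.
  replace (sin (PI / 2) ^ (n + 1) * 0 - 0 ^ (n + 1) * cos 0) with 0 in H
    by (replace (n + 1)%nat with (S n) by lia; simpl; ring).
  apply Rminus_diag_uniq. symmetry.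
  exact (is_RInt_uniq _ _ _ _ _ H (is_RInt_lincomb_R _ _ _ _ _ _ _ _ (is_RInt_wallis n) (is_RInt_wallis (n + 2)))).
Qed.

Lemma wallis_0 : wallis 0 = PI / 2.
Proof.
  apply is_RInt_uniq with (1 := is_RInt_wallis 0).
  apply (is_RInt_value _ _ _ ((fun t => t) (PI / 2) - (fun t => t) 0)); [|simpl; ring].
  apply (is_RInt_derive_le (fun t => t)); [pose proof PI2_RGT_0; lra| |].
  - intros x _. auto_derive; auto.
  - intros x _. apply continuous_sin_pow.
Qed.

Lemma wallis_1 : wallis 1 = 1.
Proof.
  apply is_RInt_uniq with (1 := is_RInt_wallis 1).
  apply (is_RInt_value _ _ _ ((fun t => - cos t) (PI / 2) - (fun t => - cos t) 0));
    [|simpl; rewrite cos_PI2, cos_0; ring].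
  apply (is_RInt_derive_le (fun t => - cos t)); [pose proof PI2_RGT_0; lra| |].
  - intros x _. auto_derive; auto. ring.
  - intros x _. apply continuous_sin_pow.
Qed.

Lemma wallis_succ_le n : wallis (S n) <= wallis n.
Proof.
  apply RInt_le; [pose proof PI2_RGT_0; lra|apply ex_RInt_sin_pow|apply ex_RInt_sin_pow|].
  intros x Hx. simpl.
  assert (0 <= sin x) by (apply sin_ge_0; pose proof PI2_Rlt_PI; lra).
  assert (sin x <= 1) by apply SIN_bound.
  assert (0 <= sin x ^ n) by (apply pow_le; lra).
  nra.
Qed.

Lemma wallis_even n : wallis (2 * n) = PI / 2 * a_ n.
Proof.
  induction n as [|n IH]; [simpl; rewrite wallis_0, a_0; ring|].
  replace (2 * S n)%nat with (2 * n + 2)%nat by lia.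
  assert (H := wallis_rec (2 * n)).
  rewrite IH, !plus_INR, mult_INR in H. simpl INR in H.
  assert (0 <= INR n) by apply pos_INR.
  rewrite a_succ. apply (Rmult_eq_reg_l (2 * INR n + 2)); [|lra].
  field_simplify; lra.
Qed.

Lemma wallis_odd n : wallis (2 * n + 1) = / ((2 * INR n + 1) * a_ n).
Proof.
  induction n as [|n IH]; [simpl; rewrite wallis_1, a_0; field|].
  replace (2 * S n + 1)%nat with (2 * n + 1 + 2)%nat by lia.
  assert (H := wallis_rec (2 * n + 1)).
  rewrite IH, !plus_INR, mult_INR in H. simpl INR in H.
  assert (0 <= INR n) by apply pos_INR. assert (Ha := a_pos n).
  rewrite a_succ, S_INR. apply (Rmult_eq_reg_l (2 * INR n + 3)); [|lra].
  transitivity ((2 * INR n + 2) * / ((2 * INR n + 1) * a_ n)); [lra|].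
  field. split; lra.
Qed.

Lemma a_sqr_ge n : 2 / (PI * (2 * INR n + 1)) <= a_ n ^ 2.
Proof.
  assert (H := wallis_succ_le (2 * n)). replace (S (2 * n)) with (2 * n + 1)%nat in H by lia.
  rewrite wallis_odd, wallis_even in H.
  assert (Ha := a_pos n). assert (Hpi := PI_RGT_0). assert (0 <= INR n) by apply pos_INR.
  assert (Hk : 0 < (2 * INR n + 1) * a_ n) by (apply Rmult_lt_0_compat; lra).
  apply Rmult_le_compat_l with (r := (2 * INR n + 1) * a_ n) in H; [|lra].
  rewrite Rinv_r in H by lra.
  apply Rmult_le_reg_l with (PI * (2 * INR n + 1) * a_ n); [apply Rmult_lt_0_compat; nra|].
  replace (PI * (2 * INR n + 1) * a_ n * (2 / (PI * (2 * INR n + 1)))) with (2 * a_ n) by (field; lra).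
  nra.
Qed.

Lemma a_succ_sqr_le n : a_ (S n) ^ 2 <= / (PI * (INR n + 1)).
Proof.
  assert (H := wallis_succ_le (2 * n + 1)). replace (S (2 * n + 1)) with (2 * S n)%nat in H by lia.
  rewrite wallis_odd, wallis_even in H.
  assert (Ha' := a_pos (S n)). assert (Hpi := PI_RGT_0).
  assert (0 <= INR n) by apply pos_INR.
  replace ((2 * INR n + 1) * a_ n) with ((2 * INR n + 2) * a_ (S n)) in H
    by (rewrite a_succ; field; lra).
  apply Rmult_le_compat_l with (r := (2 * INR n + 2) * a_ (S n)) in H; [|apply Rmult_le_pos; lra].
  rewrite Rinv_r in H by (apply Rgt_not_eq, Rmult_lt_0_compat; lra).
  apply Rmult_le_reg_l with (PI * (INR n + 1)); [apply Rmult_lt_0_compat; lra|].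
  rewrite Rinv_r by (apply Rgt_not_eq, Rmult_lt_0_compat; lra).
  nra.
Qed.

Lemma a_lim : is_lim_seq a_ 0.
Proof.
  apply is_lim_seq_incr_1.
  apply is_lim_seq_le_le with (fun _ => 0) (fun N => sqrt (/ (1 * INR N + 1))).
  - intro N. assert (Ha := a_pos (S N)). split; [lra|].
    rewrite <- (sqrt_pow2 (a_ (S N))) by lra. apply sqrt_le_1_alt.
    assert (Hpi := PI2_3_2). assert (0 <= INR N) by apply pos_INR.
    apply Rle_trans with (1 := a_succ_sqr_le N). apply Rinv_le_contravar; nra.
  - apply is_lim_seq_const.
  - rewrite <- sqrt_0. apply is_lim_seq_continuous; [apply continuity_pt_sqrt; lra|].
    apply is_lim_seq_inv_affine; lra.
Qed.

Definition g_ N := 4 * INR N ^ 2 * a_ N ^ 2 / (2 * INR N - 1).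

Lemma g_1 : g_ 1 = 1.
Proof. unfold g_. rewrite (a_succ 0), a_0. simpl. field. Qed.

Lemma g_telescope n : g_ (S n) - g_ (S (S n)) = a_ (S n) ^ 2 / (2 * INR (S n) - 1).
Proof.
  unfold g_. rewrite (a_succ (S n)), !S_INR. assert (0 <= INR n) by apply pos_INR.
  field. lra.
Qed.

Lemma g_succ_ge n : 2 / PI <= g_ (S n).
Proof.
  unfold g_. rewrite S_INR. set (x := INR n).
  assert (Hx : 0 <= x) by apply pos_INR. assert (Hpi := PI_RGT_0).
  assert (Ha := a_sqr_ge (S n)). rewrite S_INR in Ha. fold x in Ha.
  apply Rle_trans with (4 * (x + 1) ^ 2 * (2 / (PI * (2 * (x + 1) + 1))) / (2 * (x + 1) - 1)).
  - apply Rminus_le.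
    replace (2 / PI - _) with (- (2 / (PI * (2 * x + 1) * (2 * x + 3)))) by (field; lra).
    assert (0 < PI * (2 * x + 1) * (2 * x + 3)) by (apply Rmult_lt_0_compat; nra).
    assert (0 < 2 / (PI * (2 * x + 1) * (2 * x + 3))) by (apply Rdiv_lt_0_compat; lra).
    lra.
  - unfold Rdiv at 2 3. apply Rmult_le_compat_r; [apply Rlt_le, Rinv_0_lt_compat; lra|].
    apply Rmult_le_compat_l; [nra|exact Ha].
Qed.

Lemma g_succ_le n : g_ (S n) <= 2 / PI + 2 / PI * / (2 * INR n + 1).
Proof.
  unfold g_. rewrite S_INR. set (x := INR n).
  assert (Hx : 0 <= x) by apply pos_INR. assert (Hpi := PI_RGT_0).
  assert (Ha := a_succ_sqr_le n). fold x in Ha.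
  apply Rle_trans with (4 * (x + 1) ^ 2 * / (PI * (x + 1)) / (2 * (x + 1) - 1)).
  - unfold Rdiv. apply Rmult_le_compat_r; [apply Rlt_le, Rinv_0_lt_compat; lra|].
    apply Rmult_le_compat_l; [nra|exact Ha].
  - right. field. lra.
Qed.

Lemma g_lim : is_lim_seq (fun n => g_ (S n)) (2 / PI).
Proof.
  apply is_lim_seq_le_le with (fun _ => 2 / PI) (fun n => 2 / PI + 2 / PI * / (2 * INR n + 1)).
  - intro n. split; [apply g_succ_ge|apply g_succ_le].
  - apply is_lim_seq_const.
  - replace (2 / PI) with (2 / PI + 2 / PI * 0) at 1 by ring.
    apply is_lim_seq_plus'; [apply is_lim_seq_const|].
    apply is_lim_seq_mult'; [apply is_lim_seq_const|apply is_lim_seq_inv_affine; lra].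
Qed.

(** * Abel summation and the zeta(3) part *)

Definition B_ N := sum_n_m (fun n => a_ n ^ 2 / INR n) 1 N.

Lemma sum_term_abel N : sum_n term N = 8 * (1 - g_ (S N)) - 4 * B_ N - g_ (S N) * H3 N.
Proof.
  induction N as [|N IH].
  - rewrite sum_O. unfold B_, H3. rewrite !sum_n_m_zero by lia. rewrite g_1. simpl. change zero with 0. ring.
  - rewrite sum_Sn, IH. change (plus ?x ?y) with (x + y).
    change (term (S N)) with (a_ (S N) ^ 2 * H3 (S N) / (2 * INR (S N) - 1)).
    unfold B_, H3. rewrite !sum_n_Sm by lia. change (plus ?x ?y) with (x + y).
    fold (B_ N) (H3 N).
    replace (g_ (S (S N))) with (g_ (S N) - a_ (S N) ^ 2 / (2 * INR (S N) - 1))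
      by (rewrite <- g_telescope; ring).
    unfold g_. rewrite !S_INR. assert (0 <= INR N) by apply pos_INR.
    R_goal. field. lra.
Qed.

Lemma is_series_telescope : is_series (fun k => 2 * (/ (INR k + 1) - / (INR k + 2))) 2.
Proof.
  apply is_series_of_is_lim_seq.
  apply is_lim_seq_ext with (fun N => 2 - 2 * / (1 * INR N + 2)).
  - intro N. induction N as [|N IH].
    + rewrite sum_O. simpl. field.
    + rewrite sum_Sn. change (plus ?x ?y) with (x + y). rewrite <- IH, S_INR.
      assert (0 <= INR N) by apply pos_INR. field. lra.
  - replace 2 with (2 - 2 * 0) at 1 by ring.
    apply is_lim_seq_minus'; [apply is_lim_seq_const|].
    apply is_lim_seq_mult'; [apply is_lim_seq_const|apply is_lim_seq_inv_affine; lra].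
Qed.

Lemma ex_series_zeta3 : ex_series (fun k => / (INR k + 1) ^ 3).
Proof.
  apply (ex_series_le (K := R_AbsRing) (V := R_CompleteNormedModule) _
           (fun k => 2 * (/ (INR k + 1) - / (INR k + 2)))); [|exists 2; apply is_series_telescope].
  intro n. change (norm ?x) with (Rabs x). assert (0 <= INR n) by apply pos_INR.
  assert (Hc : 0 < / (INR n + 1) ^ 3) by (apply Rinv_0_lt_compat, pow_lt; lra).
  rewrite Rabs_pos_eq by lra.
  replace (2 * (/ (INR n + 1) - / (INR n + 2)))
    with (/ (INR n + 1) ^ 3 * (2 * (INR n + 1) ^ 2 / (INR n + 2))) by (field; lra).
  rewrite <- (Rmult_1_r (/ (INR n + 1) ^ 3)) at 1.
  apply Rmult_le_compat_l; [lra|].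
  apply Rle_div_r; nra.
Qed.

Lemma H3_lim : is_lim_seq H3 zeta3.
Proof.
  apply is_lim_seq_incr_1.
  apply is_lim_seq_ext with (sum_n (fun k => / (INR k + 1) ^ 3)).
  - intro N. unfold H3, sum_n. rewrite <- sum_n_m_S.
    apply sum_n_m_ext. intro k. rewrite S_INR. reflexivity.
  - exact (Series_correct _ ex_series_zeta3).
Qed.

(** * The sum of a_n^2 / n as an integral *)

Lemma is_RInt_weighted_sin_pow_cos e :
  is_RInt (fun t => (PI / 2 - t) * sin t ^ e * cos t) 0 (PI / 2) (wallis (S e) / INR (S e)).
Proof.
  assert (Hpi := PI_RGT_0). assert (He : 0 < INR (S e)) by (rewrite S_INR; pose proof (pos_INR e); lra).
  set (F t := (PI / 2 - t) * sin t ^ S e / INR (S e)).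
  assert (Hibp : is_RInt (fun t => (PI / 2 - t) * sin t ^ e * cos t - / INR (S e) * sin t ^ S e)
                   0 (PI / 2) (F (PI / 2) - F 0)).
  { apply is_RInt_derive_le; [lra| |].
    - intros x _. unfold F. auto_derive; [auto|].
      simpl Init.Nat.pred. R_goal. change (sin x ^ S e) with (sin x * sin x ^ e).
      change (match e with 0%nat => 1 | S _ => INR e + 1 end) with (INR (S e)).
      field. lra.
    - intros x _. apply continuous_of_ex_derive. auto_derive. auto. }
  replace (F (PI / 2) - F 0) with 0 in Hibp
    by (unfold F; rewrite sin_0, pow_i by lia; field; lra).
  assert (H := is_RInt_plus_R _ _ _ _ _ _ Hibp (is_RInt_scal_R _ _ _ (/ INR (S e)) _ (is_RInt_wallis (S e)))).
  eapply is_RInt_ext; [|apply (is_RInt_value _ _ _ _ _ H)].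
  - intros x _. simpl. ring.
  - R_goal. unfold Rdiv. ring.
Qed.

Fixpoint Phi (N : nat) (t : R) : R :=
  match N with
  | O => 0
  | S M => Phi M t + a_ (S M) * ((PI / 2 - t) * sin t ^ (2 * M + 1) * cos t)
  end.

Lemma is_RInt_Phi N : is_RInt (Phi N) 0 (PI / 2) (PI / 4 * B_ N).
Proof.
  induction N as [|N IH].
  - unfold B_. rewrite sum_n_m_zero by lia.
    apply (is_RInt_value _ _ _ _ _ (is_RInt_const _ _ 0)). change zero with 0.
    change (scal ?a ?b) with (a * b). R_goal. ring.
  - assert (HN := is_RInt_weighted_sin_pow_cos (2 * N + 1)).
    replace (S (2 * N + 1)) with (2 * S N)%nat in HN by lia.
    rewrite wallis_even in HN.
    eapply is_RInt_ext;
      [|apply (is_RInt_value _ _ _ _ _ (is_RInt_plus_R _ _ _ _ _ _ IH (is_RInt_scal_R _ _ _ (a_ (S N)) _ HN)))].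
    + reflexivity.
    + unfold B_. rewrite sum_n_Sm by lia. change (plus ?x ?y) with (x + y).
      rewrite mult_INR. simpl (INR 2). assert (0 <= INR N) by apply pos_INR.
      rewrite S_INR. R_goal. field. lra.
Qed.

Fixpoint a_poly (N : nat) (x : R) : R :=
  match N with
  | O => 1
  | S M => a_poly M x + a_ (S M) * x ^ S M
  end.

Lemma a_poly_0 N : a_poly N 0 = 1.
Proof. induction N as [|N IH]; [reflexivity|]. simpl. rewrite IH. ring. Qed.

(* Since sum_n a_n x^n = (1 - x)^(-1/2), [Delta N t] is the tail of the
   generating function at x = sin^2 t, scaled by cos t. *)
Definition Delta N t := 1 - cos t * a_poly N (sin t ^ 2).

Lemma Delta_0 N : Delta N 0 = 0.
Proof. unfold Delta. rewrite sin_0, cos_0, pow_i, a_poly_0 by lia. ring. Qed.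

Lemma pow_odd x N : x ^ (2 * N + 1) = x * (x ^ 2) ^ N.
Proof. rewrite pow_add, <- pow_mult. ring. Qed.

(* The derivative telescopes since (2n + 2) a_(n+1) = (2n + 1) a_n. *)
Lemma is_derive_Delta N t : is_derive (Delta N) t ((2 * INR N + 1) * a_ N * sin t ^ (2 * N + 1)).
Proof.
  induction N as [|N IH].
  - unfold Delta. simpl a_poly. auto_derive; auto. rewrite a_0. R_goal. simpl. ring.
  - apply (is_derive_ext (fun t => Delta N t - cos t * (a_ (S N) * (sin t ^ 2) ^ S N))).
    { intro u. unfold Delta. R_goal. change (a_poly (S N) ?x) with (a_poly N x + a_ (S N) * x ^ S N). ring. }
    eapply is_derive_value; [apply (is_derive_minus_R (Delta N)); [exact IH|auto_derive; auto]|].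
    change (match N with 0%nat => 1 | S _ => INR N + 1 end) with (INR (S N)).
    change (sin t * (sin t * 1)) with (sin t ^ 2).
    rewrite (pow_odd (sin t) N), (pow_odd (sin t) (S N)), a_succ, !S_INR.
    assert (0 <= INR N) by apply pos_INR.
    assert (Hsc := sin2_cos2 t). unfold Rsqr in Hsc.
    apply Rminus_diag_uniq.
    replace (_ - _) with
      (- (2 * INR N + 1) * a_ N * sin t * (sin t ^ 2) ^ N * (sin t * sin t + cos t * cos t - 1))
      by (simpl pow; field; lra).
    rewrite Hsc. ring.
Qed.

Lemma Delta_nonneg N t : 0 <= t <= PI / 2 -> 0 <= Delta N t.
Proof.
  intros Ht. rewrite <- (Delta_0 N).
  apply (nondecreasing_of_is_derive (Delta N) (fun x => (2 * INR N + 1) * a_ N * sin x ^ (2 * N + 1)));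
    [lra|intros x _; apply is_derive_Delta|].
  intros x Hx. assert (0 <= INR N) by apply pos_INR. assert (Ha := a_pos N).
  assert (0 <= sin x) by (apply sin_ge_0; pose proof PI2_Rlt_PI; lra).
  apply Rmult_le_pos; [apply Rmult_le_pos; lra|apply pow_le; lra].
Qed.

Lemma is_derive_a_sin_pow_div_cos N x : 0 < cos x ->
  is_derive (fun t => a_ N * sin t ^ (2 * N + 2) / cos t) x
    (a_ N * sin x ^ (2 * N + 1) * ((2 * INR N + 2) + sin x ^ 2 / cos x ^ 2)).
Proof.
  intro Hc. auto_derive; [lra|].
  replace (N + (N + 0) + 2)%nat with (S (2 * N + 1)) by lia.
  simpl Init.Nat.pred. change (sin x ^ S (2 * N + 1)) with (sin x * sin x ^ (2 * N + 1)).
  replace (N + (N + 0) + 1)%nat with (2 * N + 1)%nat by lia.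
  rewrite S_INR, plus_INR, mult_INR. simpl (INR 2). simpl (INR 1). R_goal. field. lra.
Qed.

(* Compare derivatives: (a_N sin^(2N+2) t / cos t)' exceeds Delta' = (2N+1) a_N sin^(2N+1) t. *)
Lemma Delta_le N t : 0 <= t < PI / 2 -> Delta N t <= a_ N * sin t ^ (2 * N + 2) / cos t.
Proof.
  intros Ht.
  assert (Hcos : forall x, 0 <= x <= t -> 0 < cos x).
  { intros x Hx. apply cos_gt_0; pose proof PI2_RGT_0; lra. }
  enough (H : 0 <= a_ N * sin t ^ (2 * N + 2) / cos t - Delta N t) by lra.
  replace 0 with (a_ N * sin 0 ^ (2 * N + 2) / cos 0 - Delta N 0) at 1
    by (rewrite Delta_0, sin_0, cos_0, pow_i by lia; field).
  apply (nondecreasing_of_is_derive (fun u => a_ N * sin u ^ (2 * N + 2) / cos u - Delta N u)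
     (fun x => a_ N * sin x ^ (2 * N + 1) * ((2 * INR N + 2) + sin x ^ 2 / cos x ^ 2)
            - (2 * INR N + 1) * a_ N * sin x ^ (2 * N + 1))); [lra| |].
  - intros x Hx. apply is_derive_minus_R; [apply is_derive_a_sin_pow_div_cos, Hcos, Hx|apply is_derive_Delta].
  - intros x Hx. assert (0 <= INR N) by apply pos_INR. assert (Ha := a_pos N).
    assert (Hc := Hcos x Hx).
    assert (0 <= sin x) by (apply sin_ge_0; pose proof PI2_Rlt_PI; lra).
    assert (0 <= sin x ^ (2 * N + 1)) by (apply pow_le; lra).
    assert (0 <= sin x ^ 2 / cos x ^ 2) by (apply Rdiv_le_0_compat; [apply pow2_ge_0|apply pow_lt; lra]).
    replace (_ - _) with (a_ N * sin x ^ (2 * N + 1) * (1 + sin x ^ 2 / cos x ^ 2)) by ring.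
    apply Rmult_le_pos; [apply Rmult_le_pos|]; lra.
Qed.

Lemma sin_ge_third u : 0 <= u <= 2 -> u / 3 <= sin u.
Proof.
  intros Hu. assert (Hpi := PI2_3_2).
  destruct (SIN u) as [H _]; [lra|lra|].
  eapply Rle_trans; [|exact H].
  replace (sin_lb u) with (u * (1 - (u * u) / 6 + (u * u) * (u * u) / 120
                                - (u * u) * (u * u) * (u * u) / 5040))
    by (unfold sin_lb, sin_approx, sin_term; simpl; field).
  assert (0 <= u * u <= 4) by nra.
  set (v := u * u) in *.
  assert (0 <= v * v * (42 - v)) by (apply Rmult_le_pos; nra).
  nra.
Qed.

Lemma tan_half t : 0 < t < PI -> tan (t / 2) = (1 - cos t) / sin t.
Proof.
  intros Ht.
  assert (0 < cos (t / 2)) by (apply cos_gt_0; lra).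
  assert (0 < sin (t / 2)) by (apply sin_gt_0; lra).
  assert (0 < sin t) by (apply sin_gt_0; lra).
  replace t with (2 * (t / 2)) at 2 3 by field.
  rewrite sin_2a, cos_2a_sin. unfold tan. field. lra.
Qed.

Lemma sin_mul_Phi N t : sin t * Phi N t = (PI / 2 - t) * cos t * (a_poly N (sin t ^ 2) - 1).
Proof.
  induction N as [|N IH]; [simpl; ring|].
  change (Phi (S N) t) with (Phi N t + a_ (S N) * ((PI / 2 - t) * sin t ^ (2 * N + 1) * cos t)).
  change (a_poly (S N) (sin t ^ 2)) with (a_poly N (sin t ^ 2) + a_ (S N) * (sin t ^ 2) ^ S N).
  rewrite pow_odd. change ((sin t ^ 2) ^ S N) with (sin t ^ 2 * (sin t ^ 2) ^ N).
  rewrite Rmult_plus_distr_l, IH. ring.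
Qed.

Definition Phi_lim t := (PI / 2 - t) * tan (t / 2).

Lemma Phi_lim_minus_Phi N t : 0 < t < PI / 2 ->
  Phi_lim t - Phi N t = (PI / 2 - t) * Delta N t / sin t.
Proof.
  intros Ht.
  assert (0 < sin t) by (apply sin_gt_0; lra).
  unfold Phi_lim. rewrite tan_half by lra.
  apply (Rmult_eq_reg_l (sin t)); [|lra].
  rewrite Rmult_minus_distr_l, sin_mul_Phi. unfold Delta. field. lra.
Qed.

Lemma Phi_lim_minus_Phi_bounds N t : 0 < t < PI / 2 -> 0 <= Phi_lim t - Phi N t <= 3 * a_ N.
Proof.
  intros Ht.
  assert (Hs : 0 < sin t) by (apply sin_gt_0; lra).
  assert (Hc : 0 < cos t) by (apply cos_gt_0; lra).
  assert (Ha := a_pos N).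
  rewrite Phi_lim_minus_Phi by exact Ht.
  assert (HD0 := Delta_nonneg N t (conj (Rlt_le _ _ (proj1 Ht)) (Rlt_le _ _ (proj2 Ht)))).
  assert (HD1 := Delta_le N t (conj (Rlt_le _ _ (proj1 Ht)) (proj2 Ht))).
  split; [apply Rdiv_le_0_compat; [apply Rmult_le_pos|]; lra|].
  assert (Hshift : (PI / 2 - t) / cos t <= 3).
  { apply Rle_div_l; [lra|]. rewrite <- sin_shift.
    assert (H := sin_ge_third (PI / 2 - t)). assert (Hpi4 := PI_4). lra. }
  assert (Hp : 0 <= sin t ^ (2 * N + 1) <= 1).
  { split; [apply pow_le; lra|]. rewrite <- (pow1 (2 * N + 1)).
    apply pow_incr. split; [lra|apply SIN_bound]. }
  apply Rle_trans with ((PI / 2 - t) * (a_ N * sin t ^ (2 * N + 2) / cos t) / sin t).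
  - unfold Rdiv. apply Rmult_le_compat_r; [apply Rlt_le, Rinv_0_lt_compat; lra|].
    apply Rmult_le_compat_l; lra.
  - replace ((PI / 2 - t) * (a_ N * sin t ^ (2 * N + 2) / cos t) / sin t)
      with (a_ N * sin t ^ (2 * N + 1) * ((PI / 2 - t) / cos t))
      by (replace (2 * N + 2)%nat with (S (2 * N + 1)) by lia; simpl pow; field; lra).
    assert (0 <= (PI / 2 - t) / cos t) by (apply Rdiv_le_0_compat; lra).
    apply Rle_trans with (a_ N * 1 * 3); [|lra].
    apply Rmult_le_compat; [apply Rmult_le_pos; lra|lra|apply Rmult_le_compat_l; lra|lra].
Qed.

Lemma ex_RInt_Phi_lim : ex_RInt Phi_lim 0 (PI / 2).
Proof.
  apply ex_RInt_of_continuous. intros t Ht.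
  rewrite Rmin_left, Rmax_right in Ht by (pose proof PI2_RGT_0; lra).
  assert (0 < cos (t / 2)) by (apply cos_gt_0; pose proof PI2_Rlt_PI; lra).
  apply continuous_of_ex_derive. unfold Phi_lim, tan. auto_derive. lra.
Qed.

Lemma RInt_Phi_lim_bounds N :
  PI / 4 * B_ N <= RInt Phi_lim 0 (PI / 2) <= PI / 4 * B_ N + PI / 2 * (3 * a_ N).
Proof.
  assert (Hpi2 := PI2_RGT_0).
  assert (HN := is_RInt_Phi N).
  assert (HN3 : is_RInt (fun t => Phi N t + 3 * a_ N) 0 (PI / 2) (PI / 4 * B_ N + PI / 2 * (3 * a_ N))).
  { apply is_RInt_plus_R; [exact HN|].
    apply (is_RInt_value _ _ _ _ _ (is_RInt_const _ _ _)).
    change (scal ?a ?b) with (a * b). R_goal. ring. }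
  rewrite <- (is_RInt_unique _ _ _ _ HN) at 1. rewrite <- (is_RInt_unique _ _ _ _ HN3).
  split; apply RInt_le; try lra; try apply ex_RInt_Phi_lim; try (eexists; eassumption);
    intros t Ht; assert (H := Phi_lim_minus_Phi_bounds N t Ht); lra.
Qed.

Lemma B_lim_RInt : is_lim_seq B_ (4 / PI * RInt Phi_lim 0 (PI / 2)).
Proof.
  assert (Hpi := PI_RGT_0).
  apply is_lim_seq_of_dist_le with (fun N => 6 * a_ N).
  - intro N. assert (H := RInt_Phi_lim_bounds N). apply Rabs_le.
    set (K := RInt Phi_lim 0 (PI / 2)) in *.
    assert (Hk : 0 < 4 / PI) by (apply Rdiv_lt_0_compat; lra).
    replace (B_ N - 4 / PI * K) with (4 / PI * (PI / 4 * B_ N - K)) by (field; lra).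
    replace (6 * a_ N) with (4 / PI * (PI / 2 * (3 * a_ N))) by (field; lra).
    split; [rewrite Ropp_mult_distr_r|]; apply Rmult_le_compat_l; lra.
  - replace (Finite 0) with (Rbar_mult 6 0) by (simpl; f_equal; ring). apply is_lim_seq_scal_l, a_lim.
Qed.

(** * Catalan's constant as an integral *)

Definition atan_over u := if Req_EM_T u 0 then 1 else atan u / u.

Lemma atan_over_mul u : atan_over u * u = atan u.
Proof. unfold atan_over. destruct (Req_EM_T u 0) as [->|h]; [rewrite atan_0; ring|field; exact h]. Qed.

Lemma continuous_atan_over u : continuous atan_over u.
Proof.
  destruct (Req_EM_T u 0) as [->|hu].
  - (* At 0 this is the derivative atan'(0) = 1. *)
    apply continuity_pt_filterlim. intros eps Heps.
    destruct (derivable_pt_lim_atan 0 eps Heps) as [del Hdel].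
    exists del. split; [apply cond_pos|]. intros x [[_ Hx0] Hxd]. simpl in Hxd |- *.
    unfold atan_over, Rdist in *. destruct (Req_EM_T 0 0) as [_|h]; [|lra].
    destruct (Req_EM_T x 0) as [->|h]; [congruence|].
    rewrite Rminus_0_r in Hxd. specialize (Hdel x h Hxd).
    rewrite Rplus_0_l, atan_0, Rminus_0_r in Hdel.
    replace (/ (1 + 0 ^ 2)) with 1 in Hdel by (simpl; field). exact Hdel.
  - apply (continuous_ext_loc _ (fun y : R => atan y / y)).
    + assert (Hp : 0 < Rabs u) by (apply Rabs_pos_lt; exact hu).
      exists (mkposreal _ Hp). intros y Hy. unfold atan_over.
      destruct (Req_EM_T y 0) as [->|hy]; [|reflexivity].
      change (Rabs (0 - u) < Rabs u) in Hy. rewrite Rminus_0_l, Rabs_Ropp in Hy. lra.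
    + apply continuous_of_ex_derive. auto_derive. exact hu.
Qed.

Definition atan_taylor N u := sum_n (fun k => (-1) ^ k * (u ^ 2) ^ k / (2 * INR k + 1)) N.

Lemma atan_taylor_0 N : atan_taylor N 0 = 1.
Proof.
  unfold atan_taylor. induction N as [|N IH].
  - rewrite sum_O. simpl. field.
  - rewrite sum_Sn, IH. change (plus ?x ?y) with (x + y). simpl pow.
    rewrite S_INR. assert (0 <= INR N) by apply pos_INR. R_goal. field. lra.
Qed.

Lemma is_derive_mul_atan_taylor N u :
  is_derive (fun x => x * atan_taylor N x) u ((1 - (-1) ^ S N * (u ^ 2) ^ S N) / (1 + u ^ 2)).
Proof.
  assert (Hu : 0 < 1 + u ^ 2) by (pose proof (pow2_ge_0 u); lra).
  induction N as [|N IH].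
  - apply (is_derive_ext (fun x => x)).
    { intro x. unfold atan_taylor. rewrite sum_O. simpl. symmetry. R_goal. field. }
    apply (is_derive_value _ _ 1); [auto_derive; auto|]. simpl. field. lra.
  - apply (is_derive_ext
      (fun x => x * atan_taylor N x + (-1) ^ S N / (2 * INR (S N) + 1) * (x * (x ^ 2) ^ S N))).
    { intro x. unfold atan_taylor. rewrite sum_Sn. change (plus ?a ?b) with (a + b).
      rewrite S_INR. assert (0 <= INR N) by apply pos_INR. R_goal. field. lra. }
    eapply is_derive_value.
    { apply (is_derive_plus (fun x => x * atan_taylor N x)); [exact IH|].
      apply (is_derive_scal (fun x => x * (x ^ 2) ^ S N)), is_derive_odd_pow. }
    change (plus ?a ?b) with (a + b). change (scal ?a ?b) with (a * b).
    rewrite S_INR. assert (0 <= INR N) by apply pos_INR. simpl pow. R_goal. field. lra.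
Qed.

Lemma is_derive_atan_taylor_rem N x :
  is_derive (fun x => atan x - x * atan_taylor N x) x ((-1) ^ S N * (x ^ 2) ^ S N / (1 + x ^ 2)).
Proof.
  assert (0 <= x ^ 2) by apply pow2_ge_0.
  eapply is_derive_value; [apply is_derive_minus_R|].
  - apply is_derive_Reals, derivable_pt_lim_atan.
  - apply is_derive_mul_atan_taylor.
  - R_goal. field. lra.
Qed.

(* For s = 1 and s = -1, [u^(2N+3)/(2N+3) + s (atan u - u atan_taylor N u)] is
   nondecreasing, because the derivative of the remainder has modulus at most u^(2N+2). *)
Lemma atan_taylor_err N u : 0 <= u ->
  Rabs (atan u - u * atan_taylor N u) <= u * (u ^ 2) ^ S N / (2 * INR (S N) + 1).
Proof.
  intros Hu. assert (0 <= INR N) by apply pos_INR.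
  assert (Hd : forall s x, is_derive
     (fun x => x * (x ^ 2) ^ S N / (2 * INR (S N) + 1) + s * (atan x - x * atan_taylor N x)) x
     ((x ^ 2) ^ S N * (1 + s * ((-1) ^ S N / (1 + x ^ 2))))).
  { intros s x. assert (0 <= x ^ 2) by apply pow2_ge_0.
    eapply is_derive_value.
    { apply (is_derive_plus (fun x => x * (x ^ 2) ^ S N / (2 * INR (S N) + 1))).
      - apply (is_derive_ext (fun x => / (2 * INR (S N) + 1) * (x * (x ^ 2) ^ S N)));
          [intro t; R_goal; unfold Rdiv; ring|].
        apply (is_derive_scal (fun x => x * (x ^ 2) ^ S N)), is_derive_odd_pow.
      - apply (is_derive_scal (fun x => atan x - x * atan_taylor N x)), is_derive_atan_taylor_rem. }
    change (plus ?a ?b) with (a + b). change (scal ?a ?b) with (a * b).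
    rewrite S_INR. R_goal. field. split; lra. }
  assert (Hpos : forall s, -1 <= s <= 1 -> forall x,
            0 <= (x ^ 2) ^ S N * (1 + s * ((-1) ^ S N / (1 + x ^ 2)))).
  { intros s Hs x. apply Rmult_le_pos; [apply pow_le, pow2_ge_0|].
    assert (Hx : 0 <= x ^ 2) by apply pow2_ge_0.
    assert (Hb : Rabs ((-1) ^ S N / (1 + x ^ 2)) <= 1).
    { unfold Rdiv. rewrite Rabs_mult, pow_1_abs, Rmult_1_l, Rabs_pos_eq
        by (apply Rlt_le, Rinv_0_lt_compat; lra).
      rewrite <- Rinv_1. apply Rinv_le_contravar; lra. }
    apply Rabs_le_between in Hb. destruct (Rle_dec 0 s); nra. }
  assert (H1 := nondecreasing_of_is_derive _ _ 0 u Hu (fun x _ => Hd 1 x) (fun x _ => Hpos 1 ltac:(lra) x)).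
  assert (H2 := nondecreasing_of_is_derive _ _ 0 u Hu (fun x _ => Hd (-1) x) (fun x _ => Hpos (-1) ltac:(lra) x)).
  cbv beta in H1, H2. rewrite atan_0 in H1, H2.
  replace (0 * (0 ^ 2) ^ S N / (2 * INR (S N) + 1) + 1 * (0 - 0 * atan_taylor N 0)) with 0 in H1
    by (rewrite S_INR; field; lra).
  replace (0 * (0 ^ 2) ^ S N / (2 * INR (S N) + 1) + -1 * (0 - 0 * atan_taylor N 0)) with 0 in H2
    by (rewrite S_INR; field; lra).
  apply Rabs_le. lra.
Qed.

Lemma is_RInt_atan_taylor N :
  is_RInt (atan_taylor N) 0 1 (sum_n (fun k => (-1) ^ k / (2 * INR k + 1) ^ 2) N).
Proof.
  assert (Hterm : forall k, is_RInt (fun u => (-1) ^ k * (u ^ 2) ^ k / (2 * INR k + 1)) 0 1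
                                    ((-1) ^ k / (2 * INR k + 1) ^ 2)).
  { intro k. assert (0 <= INR k) by apply pos_INR.
    set (F u := (-1) ^ k / (2 * INR k + 1) ^ 2 * (u * (u ^ 2) ^ k)).
    apply (is_RInt_value _ _ _ (F 1 - F 0));
      [|unfold F; replace (1 ^ 2) with 1 by ring; rewrite pow1; R_goal; field; lra].
    apply is_RInt_derive_le; [lra| |].
    - intros x _. eapply is_derive_value;
        [apply (is_derive_scal (fun x => x * (x ^ 2) ^ k)), is_derive_odd_pow|].
      change (scal ?a ?b) with (a * b). R_goal. field. lra.
    - intros x _. apply continuous_of_ex_derive. auto_derive. lra. }
  unfold atan_taylor. induction N as [|N IH].
  - eapply is_RInt_ext; [|apply (is_RInt_value _ _ _ _ _ (Hterm 0%nat))]; [|now rewrite sum_O].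
    intros x _. now rewrite sum_O.
  - eapply is_RInt_ext; [|apply (is_RInt_value _ _ _ _ _ (is_RInt_plus_R _ _ _ _ _ _ IH (Hterm (S N))))].
    + intros x _. now rewrite sum_Sn.
    + now rewrite sum_Sn.
Qed.

Lemma atan_over_taylor_err N u : 0 <= u <= 1 ->
  Rabs (atan_over u - atan_taylor N u) <= / (2 * INR (S N) + 1).
Proof.
  intros Hu. assert (Hn : 0 < 2 * INR (S N) + 1) by (rewrite S_INR; pose proof (pos_INR N); lra).
  destruct (Req_dec u 0) as [->|Hu0].
  - unfold atan_over. destruct (Req_EM_T 0 0) as [_|]; [|lra].
    rewrite atan_taylor_0, Rminus_eq_0, Rabs_R0. apply Rlt_le, Rinv_0_lt_compat, Hn.
  - replace (atan_over u - atan_taylor N u) with ((atan u - u * atan_taylor N u) / u)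
      by (rewrite <- (atan_over_mul u); field; exact Hu0).
    unfold Rdiv. rewrite Rabs_mult, Rabs_inv, (Rabs_pos_eq u) by lra.
    apply Rle_trans with (u * (u ^ 2) ^ S N / (2 * INR (S N) + 1) * / u).
    { apply Rmult_le_compat_r; [apply Rlt_le, Rinv_0_lt_compat; lra|apply atan_taylor_err; lra]. }
    replace (u * (u ^ 2) ^ S N / (2 * INR (S N) + 1) * / u)
      with ((u ^ 2) ^ S N * / (2 * INR (S N) + 1)) by (field; lra).
    rewrite <- (Rmult_1_l (/ (2 * INR (S N) + 1))) at 2.
    apply Rmult_le_compat_r; [apply Rlt_le, Rinv_0_lt_compat, Hn|].
    rewrite <- (pow1 (S N)). apply pow_incr. split; [apply pow2_ge_0|nra].
Qed.

Lemma catalan_RInt : catalan = RInt atan_over 0 1.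
Proof.
  unfold catalan. apply is_series_unique, is_series_of_is_lim_seq.
  apply is_lim_seq_of_dist_le with (fun N => / (2 * INR (S N) + 1)).
  - intro N. rewrite Rabs_minus_sym.
    replace (/ (2 * INR (S N) + 1)) with ((1 - 0) * / (2 * INR (S N) + 1)) by ring.
    apply is_RInt_dist_le with atan_over (atan_taylor N); [lra| | |].
    + apply is_RInt_RInt, ex_RInt_of_continuous. intros; apply continuous_atan_over.
    + apply is_RInt_atan_taylor.
    + intros u Hu. apply atan_over_taylor_err, Hu.
  - apply (is_lim_seq_incr_1 (fun N => / (2 * INR N + 1))), (is_lim_seq_inv_affine 2 1); lra.
Qed.

(** * Integrals of s tan s and s cot s *)

Lemma is_derive_tan x : 0 < cos x -> is_derive tan x (1 + tan x ^ 2).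
Proof. intros Hc. unfold tan. auto_derive; [lra|]. R_goal. field. lra. Qed.

Lemma continuous_tan x : 0 < cos x -> continuous tan x.
Proof. intros Hc. apply continuous_of_ex_derive. eexists. apply is_derive_tan, Hc. Qed.

Lemma cos_pos_PI4 s : 0 <= s <= PI / 4 -> 0 < cos s.
Proof. intros Hs. apply cos_gt_0; pose proof PI_RGT_0; lra. Qed.

Lemma is_RInt_tan : is_RInt tan 0 (PI / 4) (ln 2 / 2).
Proof.
  assert (Hpi := PI_RGT_0).
  apply (is_RInt_value _ _ _ ((fun s => - ln (cos s)) (PI / 4) - (fun s => - ln (cos s)) 0)).
  - apply (is_RInt_derive_le (fun s => - ln (cos s))); [lra| |].
    + intros x Hx. assert (Hc := cos_pos_PI4 x Hx). auto_derive; [lra|].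
      unfold tan. R_goal. field. lra.
    + intros x Hx. apply continuous_tan, cos_pos_PI4, Hx.
  - cbv beta. rewrite cos_PI4, cos_0, ln_1.
    unfold Rdiv. rewrite Rmult_1_l, ln_Rinv by apply Rlt_sqrt2_0.
    rewrite <- (sqrt_sqrt 2) at 2 by lra. rewrite ln_mult by apply Rlt_sqrt2_0. R_goal. field.
Qed.

Definition Ltan := RInt (fun s => s * tan s) 0 (PI / 4).

Lemma is_RInt_Ltan : is_RInt (fun s => s * tan s) 0 (PI / 4) Ltan.
Proof.
  apply is_RInt_RInt, ex_RInt_of_continuous. intros s Hs.
  rewrite Rmin_left, Rmax_right in Hs by (pose proof PI_RGT_0; lra).
  assert (Hc := cos_pos_PI4 s Hs).
  apply continuous_of_ex_derive. unfold tan. auto_derive. lra.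
Qed.

(* [s cot s], extended by its limit 1 at [s = 0]. *)
Definition s_cot s := atan_over (tan s).

Lemma s_cot_eq s : 0 < s < PI / 2 -> s_cot s = s * cos s / sin s.
Proof.
  intros Hs.
  assert (0 < sin s) by (apply sin_gt_0; lra).
  assert (0 < cos s) by (apply cos_gt_0; lra).
  assert (Ht : 0 < tan s) by (apply tan_gt_0; lra).
  unfold s_cot. apply (Rmult_eq_reg_r (tan s)); [|lra].
  rewrite atan_over_mul, atan_tan by lra. unfold tan. field. lra.
Qed.

(* Substitution u = tan s in G = int_0^1 atan u / u du. *)
Lemma is_RInt_s_cot_low : is_RInt s_cot 0 (PI / 4) (catalan - Ltan).
Proof.
  assert (Hpi := PI_RGT_0).
  assert (Hsub : is_RInt (fun s => scal (1 + tan s ^ 2) (atan_over (tan s))) 0 (PI / 4)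
                   (RInt atan_over (tan 0) (tan (PI / 4)))).
  { apply (is_RInt_comp atan_over tan (fun s => 1 + tan s ^ 2)); [intros; apply continuous_atan_over|].
    intros x Hx. rewrite Rmin_left, Rmax_right in Hx by lra. assert (Hc := cos_pos_PI4 x Hx).
    split; [apply is_derive_tan, Hc|]. apply continuous_of_ex_derive. unfold tan. auto_derive. lra. }
  rewrite tan_0, tan_PI4, <- catalan_RInt in Hsub.
  eapply is_RInt_ext;
    [|apply (is_RInt_value _ _ _ _ _ (is_RInt_lincomb_R _ _ _ _ _ _ 1 1 Hsub is_RInt_Ltan)); R_goal; ring].
  intros s Hs. rewrite Rmin_left, Rmax_right in Hs by lra.
  change (scal ?a ?b) with (a * b). unfold s_cot.
  replace (s * tan s) with (atan_over (tan s) * tan s * tan s)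
    by (rewrite atan_over_mul, atan_tan by lra; ring).
  R_goal. ring.
Qed.

(* Reflection s -> pi/2 - s. *)
Lemma is_RInt_s_cot_high : is_RInt s_cot (PI / 4) (PI / 2) (PI / 2 * (ln 2 / 2) - Ltan).
Proof.
  assert (Hpi := PI_RGT_0).
  assert (H := is_RInt_lincomb_R _ _ _ _ _ _ (PI / 2) 1 is_RInt_tan is_RInt_Ltan).
  apply (is_RInt_ext _ (fun s => (PI / 2 - s) * tan s)) in H; [|intros; R_goal; ring].
  apply (is_RInt_swap (V := R_NormedModule)) in H.
  apply (is_RInt_bounds _ _ _ (-1 * (PI / 4) + PI / 2) (-1 * (PI / 2) + PI / 2)) in H; [|field|field].
  apply (is_RInt_comp_lin (V := R_NormedModule)), (is_RInt_scal (V := R_NormedModule) _ _ _ (-1)) in H.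
  eapply is_RInt_ext; [|apply (is_RInt_value _ _ _ _ _ H)].
  - intros s Hs. rewrite Rmin_left, Rmax_right in Hs by lra.
    change (scal ?a ?b) with (a * b). change (scal ?a ?b) with (a * b).
    assert (0 < sin s) by (apply sin_gt_0; lra).
    assert (0 < cos s) by (apply cos_gt_0; lra).
    rewrite s_cot_eq by lra. replace (-1 * s + PI / 2) with (PI / 2 - s) by ring.
    unfold tan. rewrite sin_shift, cos_shift. R_goal. field. lra.
  - change (scal ?a ?b) with (a * b). change (opp ?a) with (- a). R_goal. ring.
Qed.

(* The duplication formula s cot s = (s/2) cot (s/2) - (s/2) tan (s/2). *)
Lemma is_RInt_s_cot_double : is_RInt s_cot 0 (PI / 2) (2 * (catalan - Ltan) - 2 * Ltan).
Proof.
  assert (Hpi2 := PI2_Rlt_PI).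
  assert (Ha := is_RInt_s_cot_low). assert (Hb := is_RInt_Ltan).
  apply (is_RInt_bounds _ _ _ (1 / 2 * 0 + 0) (1 / 2 * (PI / 2) + 0)) in Ha, Hb; try field.
  apply (is_RInt_comp_lin (V := R_NormedModule)) in Ha, Hb.
  eapply is_RInt_ext; [|exact (is_RInt_lincomb_R _ _ _ _ _ _ 2 2 Ha Hb)].
  intros s Hs. rewrite Rmin_left, Rmax_right in Hs by lra.
  change (scal ?a ?b) with (a * b). change (scal ?a ?b) with (a * b).
  cbv beta. replace (1 / 2 * s + 0) with (s / 2) by field.
  rewrite !s_cot_eq by lra.
  assert (0 < sin (s / 2)) by (apply sin_gt_0; lra).
  assert (0 < cos (s / 2)) by (apply cos_gt_0; lra).
  replace (sin s) with (2 * sin (s / 2) * cos (s / 2)) by (rewrite <- sin_2a; f_equal; field).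
  replace (cos s) with (cos (s / 2) * cos (s / 2) - sin (s / 2) * sin (s / 2))
    by (rewrite <- cos_2a; f_equal; field).
  unfold tan. R_goal. field. lra.
Qed.

Lemma is_RInt_Phi_lim : is_RInt Phi_lim 0 (PI / 2) (PI * (ln 2 / 2) - 4 * Ltan).
Proof.
  assert (H := is_RInt_lincomb_R _ _ _ _ _ _ PI 4 is_RInt_tan is_RInt_Ltan).
  apply (is_RInt_bounds _ _ _ (1 / 2 * 0 + 0) (1 / 2 * (PI / 2) + 0)) in H; try field.
  apply (is_RInt_comp_lin (V := R_NormedModule)) in H.
  eapply is_RInt_ext; [|exact H].
  intros s Hs. change (scal ?a ?b) with (a * b).
  cbv beta. replace (1 / 2 * s + 0) with (s / 2) by field. unfold Phi_lim. R_goal. field.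
Qed.

Lemma RInt_Phi_lim : RInt Phi_lim 0 (PI / 2) = PI * ln 2 - 2 * catalan.
Proof.
  rewrite (is_RInt_unique _ _ _ _ is_RInt_Phi_lim).
  assert (E := is_RInt_uniq _ _ _ _ _
                 (is_RInt_Chasles _ _ _ _ _ _ is_RInt_s_cot_low is_RInt_s_cot_high)
                 is_RInt_s_cot_double).
  change (plus ?a ?b) with (a + b) in E. lra.
Qed.

Lemma B_lim : is_lim_seq B_ (4 * ln 2 - 8 * catalan / PI).
Proof.
  replace (4 * ln 2 - 8 * catalan / PI) with (4 / PI * RInt Phi_lim 0 (PI / 2)); [exact B_lim_RInt|].
  rewrite RInt_Phi_lim. field. pose proof PI_RGT_0; lra.
Qed.

Theorem corollaryB10 :
  is_series term
    (2 / PI * (16 * catalan + 4 * PI - 8 * PI * ln 2 - zeta3 - 8)).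
Proof.
  apply is_series_of_is_lim_seq.
  apply is_lim_seq_ext with (fun N => 8 * (1 - g_ (S N)) - 4 * B_ N - g_ (S N) * H3 N);
    [intro N; symmetry; apply sum_term_abel|].
  replace (2 / PI * (16 * catalan + 4 * PI - 8 * PI * ln 2 - zeta3 - 8))
    with (8 * (1 - 2 / PI) - 4 * (4 * ln 2 - 8 * catalan / PI) - 2 / PI * zeta3)
    by (field; pose proof PI_RGT_0; lra).
  apply is_lim_seq_minus'; [apply is_lim_seq_minus'|].
  - apply is_lim_seq_mult'; [apply is_lim_seq_const|].
    apply is_lim_seq_minus'; [apply is_lim_seq_const|apply g_lim].
  - apply is_lim_seq_mult'; [apply is_lim_seq_const|apply B_lim].
  - apply is_lim_seq_mult'; [apply g_lim|apply H3_lim].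
Qed.
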